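(* Let $k\ge2$ and $n\ge1$ be integers. A function $f:\mathcal{S}_k^n\to\mathbf{R}\cup\{\infty\}$ is $k$-submodular if and only if $f$ is submodular on the modular semilattice $\mathcal{S}_k^n$.
   Context: $\mathcal{S}_k$ is the $(k+1)$-element poset consisting of a minimum $0$ and $k$ pairwise incomparable elements covering $0$; $\mathcal{S}_k^n$ has the componentwise order (a modular semilattice; rank $r(p)=$ number of nonzero coordinates). For $p,q\in\mathcal{S}_k^n$: $(p\wedge q)_i=p_i$ if $p_i=q_i$ and $0$ otherwise; $(p\sqcup q)_i=p_i\vee q_i$ if $p_i,q_i$ are comparable (equal or one is $0$) and $0$ if $0\ne p_i\ne q_i\ne0$. $f$ is $k$-submodular if $f(p)+f(q)\ge f(p\wedge q)+f(p\sqcup q)$ for all $p,q$. Submodularity on a modular semilattice $\mathcal{L}$ (rank $r$): for $p,q$ let $I(p,q)$ be the elements on shortest $p$–$q$ paths of the covering graph; $r(u;p,q)=(r(u\wedge p)-r(p\wedge q),r(u\wedge q)-r(p\wedge q))$; $\mathcal{E}(p,q)$ the $u\in I(p,q)$ with $r(u;p,q)$ a componentwise-maximal extreme point of the convex hull $\mathrm{Conv}I(p,q)$; $C(u;p,q)=\{w\in\mathbf{R}^2_{\ge0}:\langle w,r(u;p,q)\rangle=\max_{z\in\mathrm{Conv}I(p,q)}\langle w,z\rangle\}=\{(x,y)\ge0:y\cos\alpha\le x\sin\alpha,\ y\cos\beta\ge x\sin\beta\}$ ($0\le\beta\le\alpha\le\pi/2$), $[C]=\frac{\sin\alpha}{\sin\alpha+\cos\alpha}-\frac{\sin\beta}{\sin\beta+\cos\beta}$.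 $f$ is submodular if $f(p)+f(q)\ge f(p\wedge q)+\sum_{u\in\mathcal{E}(p,q)}[C(u;p,q)]f(u)$ for all $p,q$ (zero-coefficient terms omitted; $a+\infty=\infty$). *)

From HB Require Import structures.
From mathcomp Require Import all_boot all_order all_algebra.
From mathcomp Require Import boolp classical_sets reals ereal trigo.

Set Implicit Arguments.
Unset Strict Implicit.
Unset Printing Implicit Defensive.

Import Order.TTheory GRing.Theory Num.Theory.
Local Open Scope ring_scope.

Section SemilatticeSubmodularity.
Variables (R : realType) (T : finType) (le : rel T) (meet : T -> T -> T)
  (rk : T -> nat).

Definition slt (a b : T) : bool := le a b && (a != b).

Definition covers (a b : T) : bool :=
  slt a b && [forall c, ~~ (slt a c && slt c b)].

Definition cadj (a b : T) : bool := covers a b || covers b a.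

(* a :: s is a walk from a to b in the covering graph (of length size s) *)
Definition cwalk (a b : T) (s : seq T) : Prop := path cadj a s /\ last a s = b.

Definition shortest_walk (a b : T) (s : seq T) : Prop :=
  cwalk a b s /\ forall s', cwalk a b s' -> (size s <= size s')%N.

Definition Iset (p q u : T) : Prop :=
  exists s, shortest_walk p q s /\ u \in p :: s.

Definition rvec (p q u : T) : R * R :=
  ((rk (meet u p))%:R - (rk (meet p q))%:R,
   (rk (meet u q))%:R - (rk (meet p q))%:R).

Definition ConvI (p q : T) (z : R * R) : Prop :=
  exists lam : T -> R,
    (forall u, 0 <= lam u) /\ (forall u, ~ Iset p q u -> lam u = 0) /\
    \sum_(u : T) lam u = 1 /\
    z = (\sum_(u : T) lam u * (rvec p q u).1,
         \sum_(u : T) lam u * (rvec p q u).2).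

Definition extreme_point (S : R * R -> Prop) (z : R * R) : Prop :=
  S z /\ forall (a b : R * R) (t : R), S a -> S b -> 0 < t < 1 ->
    z = (t * a.1 + (1 - t) * b.1, t * a.2 + (1 - t) * b.2) -> a = b.

Definition cw_maximal (S : R * R -> Prop) (z : R * R) : Prop :=
  S z /\ forall z', S z' -> z.1 <= z'.1 -> z.2 <= z'.2 -> z' = z.

Definition Eset (p q u : T) : Prop :=
  Iset p q u /\ extreme_point (ConvI p q) (rvec p q u) /\
  cw_maximal (ConvI p q) (rvec p q u).

Definition dot2 (w z : R * R) : R := w.1 * z.1 + w.2 * z.2.

Definition Ccone (p q u : T) (w : R * R) : Prop :=
  0 <= w.1 /\ 0 <= w.2 /\
  (exists z0, ConvI p q z0 /\ dot2 w z0 = dot2 w (rvec p q u)) /\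
  (forall z, ConvI p q z -> dot2 w z <= dot2 w (rvec p q u)).

Definition cone_angles (p q u : T) (ab : R * R) : Prop :=
  0 <= ab.2 /\ ab.2 <= ab.1 /\ ab.1 <= pi / 2 /\
  forall x y : R, Ccone p q u (x, y) <->
    (0 <= x /\ 0 <= y /\ y * cos ab.1 <= x * sin ab.1 /\
     x * sin ab.2 <= y * cos ab.2).

(* [C(u;p,q)] (the angles are unique when they exist) *)
Definition coefC (p q u : T) : R :=
  match pselect (exists ab, cone_angles p q u ab) with
  | left H => let ab := proj1_sig (cid H) in
      sin ab.1 / (sin ab.1 + cos ab.1) - sin ab.2 / (sin ab.2 + cos ab.2)
  | right _ => 0
  end.

(* f : T -> R \cup {oo} (represented in \bar R, never taking -oo) is
   submodular.  Terms with zero coefficient vanish since 0 * oo = 0 in \bar R,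
   and c * oo = oo for c > 0. *)
Definition submodular (f : T -> \bar R) : Prop :=
  forall p q : T,
    (f (meet p q) + \sum_(u : T | `[< Eset p q u >]) (coefC p q u)%:E * f u
       <= f p + f q)%E.

End SemilatticeSubmodularity.

(* The semilattice S_k^n.  S_k = 'I_k.+1 with 0 (= ord0) the minimum and    *)
(* 1..k pairwise incomparable.                                              *)
Section Skn.
Variables k n : nat.

Definition Skn := {ffun 'I_n -> 'I_k.+1}.

Definition leS (a b : 'I_k.+1) : bool := (a == ord0) || (a == b).

Definition leSkn (p q : Skn) : bool := [forall i, leS (p i) (q i)].

Definition meetSkn (p q : Skn) : Skn :=
  [ffun i => if p i == q i then p i else ord0].

Definition sqcupSkn (p q : Skn) : Skn :=
  [ffun i => if p i == ord0 then q i
             else if q i == ord0 then p i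
             else if p i == q i then p i else ord0].

Definition rankSkn (p : Skn) : nat := #|[set i | p i != ord0]|.

Definition k_submodular (R : realType) (f : Skn -> \bar R) : Prop :=
  forall p q : Skn, (f (meetSkn p q) + f (sqcupSkn p q) <= f p + f q)%E.

End Skn.

(* The covering-graph distance on S_k^n is the sum of the coordinatewise
   distances, so I(p,q) is the product of the coordinatewise intervals and the
   rank vectors r(u;p,q), u in I(p,q), add up coordinatewise.  Their convex hull
   is then a trapezoid: for coordinatewise sums A, B, M it lies in the region
   x <= A, y <= B, x + y <= M, where M <= A + B, and the two upper corners
   (A, M - A) and (M - B, B) are attained exactly at u1 = p ⊔ (p ⊔ q) and
   u2 = q ⊔ (p ⊔ q).  Hence E(p,q) = {u1, u2} with [C] = 1/2 each (or u1 = u2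
   with [C] = 1, where the cone is the whole quadrant), and submodularity says
   f(p ∧ q) + (f u1 + f u2)/2 <= f p + f q.  This is the average of four
   k-submodular inequalities (at (p,q), (p, p ⊔ q), (q, p ⊔ q) and at the meets
   of p and q with p ⊔ q); conversely k-submodularity follows by adding the
   submodular inequalities at (p,q) and at (u1,u2), since u1 ∧ u2 = p ⊔ q. *)

From Pilot Require Import Defs.
From HB Require Import structures.
From mathcomp Require Import all_boot all_order all_algebra.
From mathcomp Require Import boolp classical_sets reals ereal trigo.
From mathcomp Require Import ring lra zify.

Set Implicit Arguments.
Unset Strict Implicit.
Unset Printing Implicit Defensive.

Import Order.TTheory GRing.Theory Num.Theory.
Local Open Scope ring_scope.

Lemma ffun_neqP (aT : finType) (rT : eqType) (f g : {ffun aT -> rT}) :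
  reflect (exists i, f i != g i) (f != g).
Proof.
apply: (iffP idP) => [fg|[i]]; last by apply: contra_neq => ->.
by apply/existsP; apply: contraNT fg => /existsPn fg; apply/eqP/ffunP => i; apply/eqP/negPn.
Qed.

Lemma ler_sum_eq (R : numDomainType) (I : finType) (F G : I -> R) :
  (forall i, F i <= G i) -> \sum_i F i = \sum_i G i -> forall i, F i = G i.
Proof.
move=> FG; have [_ eq_sum] := leif_sum (fun i (_ : true) => leif_eq (FG i)).
by move=> /eqP; rewrite eq_sum => /forallP FG_eq i; apply/eqP; have := FG_eq i.
Qed.

Section Sectors.
Variable R : realType.
Implicit Types a b x y : R.

Definition sector a b x y : Prop :=
  0 <= x /\ 0 <= y /\ y * cos a <= x * sin a /\ x * sin b <= y * cos b.

Definition angle_weight a : R := sin a / (sin a + cos a).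

Definition angle_pair a b : Prop := 0 <= b /\ b <= a /\ a <= pi / 2.

Lemma sin_cos_ge0 a : 0 <= a <= pi / 2 ->
  [/\ 0 <= sin a, 0 <= cos a & sin a ^+ 2 + cos a ^+ 2 = 1].
Proof.
move=> /andP[a0 a1]; have pi0 := pi_gt0 R; split.
- by apply: sin_ge0_pi; apply/andP; split => //; lra.
- by apply: cos_ge0_pihalf; apply/andP; split => //; lra.
- by rewrite sin2cos2 subrK.
Qed.

Lemma sin_add_cos_gt0 a : 0 <= a <= pi / 2 -> 0 < sin a + cos a.
Proof. by case/sin_cos_ge0 => s0 c0 sc; nra. Qed.

Lemma sector_cos_sin a b : angle_pair a b ->
  sector a b (cos a) (sin a) /\ sector a b (cos b) (sin b).
Proof.
case=> b0 [ba api].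
have [sa0 ca0 _] := @sin_cos_ge0 a ltac:(apply/andP; split; lra).
have [sb0 cb0 _] := @sin_cos_ge0 b ltac:(apply/andP; split; lra).
have sab : cos a * sin b <= sin a * cos b.
  rewrite -subr_ge0 -sinB; apply: sin_ge0_pi; apply/andP; split.
  - by rewrite subr_ge0.
  - by have := pi_gt0 R; lra.
by split; (split; [|split; [|split]]); nra.
Qed.

Lemma angle_weight_eq a a' : 0 <= a <= pi / 2 -> 0 <= a' <= pi / 2 ->
  sin a * cos a' = cos a * sin a' -> angle_weight a = angle_weight a'.
Proof.
move=> /sin_add_cos_gt0 /lt0r_neq0 h /sin_add_cos_gt0 /lt0r_neq0 h' e.
rewrite /angle_weight; apply/eqP; rewrite eqr_div //; apply/eqP; lra.
Qed.

Lemma angle_weight_sector a b a' b' : angle_pair a b -> angle_pair a' b' ->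
  (forall x y, sector a b x y <-> sector a' b' x y) ->
  angle_weight a - angle_weight b = angle_weight a' - angle_weight b'.
Proof.
move=> ab ab' E.
have [[_ [_ [Haa' _]]] [_ [_ [_ Hbb']]]] :
    sector a' b' (cos a) (sin a) /\ sector a' b' (cos b) (sin b).
  by have [] := sector_cos_sin ab; split; apply/E.
have [[_ [_ [Ha'a _]]] [_ [_ [_ Hb'b]]]] :
    sector a b (cos a') (sin a') /\ sector a b (cos b') (sin b').
  by have [] := sector_cos_sin ab'; split; apply/E.
case: ab ab' => b0 [ba api] [b0' [ba' api']].
by congr (_ - _); apply: angle_weight_eq; first [lra | apply/andP; split; lra].
Qed.

Lemma sin_cos_piquarter : sin (pi / 4 : R) = cos (pi / 4) /\ 0 < cos (pi / 4 : R).
Proof.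
have c0 : 0 < cos (pi / 4 : R).
  by apply: cos_gt0_pihalf; have := pi_gt0 R => ?; apply/andP; split; lra.
split => //; have := tan_piquarter R; rewrite /tan => h.
by rewrite -[sin _](divfK (lt0r_neq0 c0)) h mul1r.
Qed.

Lemma angle_weight0 : angle_weight 0 = 0.
Proof. by rewrite /angle_weight sin0 mul0r. Qed.

Lemma angle_weight_pihalf : angle_weight (pi / 2) = 1.
Proof. by rewrite /angle_weight sin_pihalf cos_pihalf addr0 divr1. Qed.

Lemma angle_weight_piquarter : angle_weight (pi / 4) = 1 / 2.
Proof.
rewrite /angle_weight; have [-> c0] := sin_cos_piquarter.
by field; rewrite -mulr2n mulrn_eq0 negb_or lt0r_neq0.
Qed.

Lemma angle_pair_quadrant : angle_pair (pi / 2) 0.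
Proof. by have := pi_gt0 R; rewrite /angle_pair; lra. Qed.

Lemma angle_pair_below_diag : angle_pair (pi / 4) 0.
Proof. by have := pi_gt0 R; rewrite /angle_pair; lra. Qed.

Lemma angle_pair_above_diag : angle_pair (pi / 2) (pi / 4).
Proof. by have := pi_gt0 R; rewrite /angle_pair; lra. Qed.

Lemma sector_quadrant x y : sector (pi / 2) 0 x y <-> 0 <= x /\ 0 <= y.
Proof.
rewrite /sector sin_pihalf cos_pihalf sin0 cos0 !mulr0 !mulr1.
by split => [[x0 [y0 _]]|[x0 y0]].
Qed.

Lemma sector_below_diag x y : sector (pi / 4) 0 x y <-> [/\ 0 <= x, 0 <= y & y <= x].
Proof.
have [sc c0] := sin_cos_piquarter.
rewrite /sector sin0 cos0 mulr0 mulr1 sc ler_pM2r //.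
by split => [[x0 [y0 [yx _]]]|[x0 y0 yx]].
Qed.

Lemma sector_above_diag x y :
  sector (pi / 2) (pi / 4) x y <-> [/\ 0 <= x, 0 <= y & x <= y].
Proof.
have [sc c0] := sin_cos_piquarter.
rewrite /sector sin_pihalf cos_pihalf mulr0 mulr1 sc ler_pM2r //.
by split => [[x0 [y0 [_ xy]]]|[x0 y0 xy]].
Qed.
End Sectors.

Section ConvexHull.
Variables (R : realType) (T : finType) (le : rel T) (meet : T -> T -> T)
  (rk : T -> nat) (p q : T).
Local Notation I := (Iset le p q).
Local Notation r := (rvec R meet rk p q).
Local Notation ConvI := (ConvI le meet rk p q).

Lemma ConvI_dot2_le w K : (forall v, I v -> dot2 w (r v) <= K) ->
  forall z, ConvI z -> dot2 w z <= K.
Proof.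
move=> H z [lam [lam_ge0 [lamI [lam1 ->]]]].
have -> : K = \sum_u lam u * K by rewrite -mulr_suml lam1 mul1r.
rewrite /dot2 /= !mulr_sumr -big_split /=.
apply: ler_sum => u _; have [Iu|nIu] := pselect (I u).
  rewrite mulrCA [X in _ + X]mulrCA -mulrDr.
  by apply: ler_wpM2l; [exact: lam_ge0|have := H u Iu; rewrite /dot2].
by rewrite lamI // !(mul0r, mulr0) addr0.
Qed.

Lemma ConvI_segment v1 v2 t : I v1 -> I v2 -> 0 <= t <= 1 ->
  ConvI (t * (r v1).1 + (1 - t) * (r v2).1, t * (r v1).2 + (1 - t) * (r v2).2).
Proof.
move=> I1 I2 /andP[t0 t1].
pose lam u := t * (u == v1)%:R + (1 - t) * (u == v2)%:R.
have sum_ind (v : T) (F : T -> R) : \sum_u (u == v)%:R * F u = F v.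
  by rewrite (bigD1 v) //= eqxx mul1r big1 ?addr0 // => u /negbTE ->; rewrite mul0r.
have sum_lam (F : T -> R) : \sum_u lam u * F u = t * F v1 + (1 - t) * F v2.
  rewrite -(sum_ind v1 F) -(sum_ind v2 F) !mulr_sumr -big_split /=.
  by apply: eq_bigr => u _; rewrite mulrDl !mulrA.
exists lam; split; [|split; [|split]].
- by move=> u; apply: addr_ge0; apply: mulr_ge0; rewrite ?subr_ge0.
- move=> u nIu; rewrite /lam.
  have /negbTE-> : u != v1 by apply/eqP => e; apply: nIu; rewrite e.
  have /negbTE-> : u != v2 by apply/eqP => e; apply: nIu; rewrite e.
  by rewrite !mulr0 addr0.
- by rewrite -(eq_bigr _ (fun u _ => mulr1 (lam u))) sum_lam !mulr1 subrKC.
- by rewrite !sum_lam.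
Qed.

Lemma ConvI_rvec v : I v -> ConvI (r v).
Proof.
move=> Iv; have := @ConvI_segment v v 1 Iv Iv; rewrite ler01 lexx subrr.
by rewrite !mul0r !addr0 !mul1r; case: (r v) => x y; apply.
Qed.

Lemma CconeE u w : I u -> Ccone le meet rk p q u w <->
  [/\ 0 <= w.1, 0 <= w.2 & forall v, I v -> dot2 w (r v) <= dot2 w (r u)].
Proof.
move=> Iu; split.
- by case=> [w1 [w2 [_ H]]]; split => // v Iv; apply/H/ConvI_rvec.
- case=> w1 w2 H; do 2!split => //; split; last exact: ConvI_dot2_le.
  by exists (r u); split => //; apply: ConvI_rvec.
Qed.

Lemma coefC_sector u (a b : R) : cone_angles le meet rk p q u (a, b) ->
  Defs.coefC R le meet rk p q u = angle_weight a - angle_weight b.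
Proof.
move=> [/= b0 [ba [api Cab]]]; rewrite /Defs.coefC.
case: pselect => [H|[]]; last by exists (a, b).
case: (cid H) => [[a' b'] [/= b0' [ba' [api' Cab']]]] /=.
apply: (@angle_weight_sector R a' b' a b) => // x y.
by rewrite /sector -Cab -Cab'.
Qed.

Lemma cone_angles_sector u (a b : R) : angle_pair a b ->
  (forall x y, Ccone le meet rk p q u (x, y) <-> sector a b x y) ->
  cone_angles le meet rk p q u (a, b).
Proof. by case=> b0 [ba api] Cab; do 3!split => //. Qed.
End ConvexHull.

Section PlanarCorners.
Variables (R : realType) (S : R * R -> Prop) (c1 c2 : R).
Hypotheses (Sc : S (c1, c2))
  (S_sum : forall z, S z -> z.1 + z.2 <= c1 + c2).

Lemma cw_maximal_sum_corner : cw_maximal S (c1, c2).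
Proof.
split => // -[z1 z2] Sz /= h1 h2.
by have /= := S_sum Sz => sz; congr pair; lra.
Qed.

Lemma extreme_point_corner_x : (forall z, S z -> z.1 <= c1) ->
  extreme_point S (c1, c2).
Proof.
move=> S1; split => // -[a1 a2] [b1 b2] t Sa Sb /andP[t0 t1] [e1 e2].
have /= := S1 _ Sa; have /= := S1 _ Sb; have /= := S_sum Sa; have /= := S_sum Sb.
move=> sb sa b1c a1c; have a1E : a1 = c1 by nra.
have b1E : b1 = c1 by nra.
by subst a1 b1; congr pair; nra.
Qed.

Lemma extreme_point_corner_y : (forall z, S z -> z.2 <= c2) ->
  extreme_point S (c1, c2).
Proof.
move=> S2; split => // -[a1 a2] [b1 b2] t Sa Sb /andP[t0 t1] [e1 e2].
have /= := S2 _ Sa; have /= := S2 _ Sb; have /= := S_sum Sa; have /= := S_sum Sb.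
move=> sb sa b2c a2c; have a2E : a2 = c2 by nra.
have b2E : b2 = c2 by nra.
by subst a2 b2; congr pair; nra.
Qed.
End PlanarCorners.

Section Trapezoid.
Variables (R : realType) (T : finType) (le : rel T) (meet : T -> T -> T)
  (rk : T -> nat) (p q u1 u2 : T) (A B M : R).
Local Notation I := (Iset le p q).
Local Notation r := (rvec R meet rk p q).
Local Notation ConvI := (ConvI le meet rk p q).
Local Notation Eset := (Eset R le meet rk p q).
Local Notation cone_angles := (cone_angles le meet rk p q).
Local Opaque rvec.

Hypotheses (rvec_le_A : forall v, I v -> (r v).1 <= A)
  (rvec_le_B : forall v, I v -> (r v).2 <= B)
  (rvec_le_M : forall v, I v -> (r v).1 + (r v).2 <= M)
  (I_u1 : I u1) (I_u2 : I u2)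
  (rvec_u1 : r u1 = (A, M - A)) (rvec_u2 : r u2 = (M - B, B))
  (rvec_u1_inj : forall v, I v -> r v = r u1 -> v = u1)
  (rvec_u2_inj : forall v, I v -> r v = r u2 -> v = u2)
  (M_le_AB : M <= A + B).

Lemma ConvI_le_A z : ConvI z -> z.1 <= A.
Proof.
move=> /(ConvI_dot2_le (w := (1, 0)) (K := A)); rewrite /dot2 /= mul1r mul0r addr0.
by apply=> v /rvec_le_A; rewrite mul1r mul0r addr0.
Qed.

Lemma ConvI_le_B z : ConvI z -> z.2 <= B.
Proof.
move=> /(ConvI_dot2_le (w := (0, 1)) (K := B)); rewrite /dot2 /= mul1r mul0r add0r.
by apply=> v /rvec_le_B; rewrite mul1r mul0r add0r.
Qed.

Lemma ConvI_le_M z : ConvI z -> z.1 + z.2 <= M.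
Proof.
move=> /(ConvI_dot2_le (w := (1, 1)) (K := M)); rewrite /dot2 /= !mul1r.
by apply=> v /rvec_le_M; rewrite !mul1r.
Qed.

Lemma Eset_u1 : Eset u1.
Proof.
have C1 := ConvI_rvec R meet rk I_u1; rewrite rvec_u1 in C1.
have Csum z : ConvI z -> z.1 + z.2 <= A + (M - A) by rewrite subrKC; apply: ConvI_le_M.
split; first exact: I_u1.
rewrite rvec_u1; split; last exact: cw_maximal_sum_corner.
exact: extreme_point_corner_x ConvI_le_A.
Qed.

Lemma Eset_u2 : Eset u2.
Proof.
have C2 := ConvI_rvec R meet rk I_u2; rewrite rvec_u2 in C2.
have Csum z : ConvI z -> z.1 + z.2 <= (M - B) + B by rewrite subrK; apply: ConvI_le_M.
split; first exact: I_u2.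
rewrite rvec_u2; split; last exact: cw_maximal_sum_corner.
exact: extreme_point_corner_y ConvI_le_B.
Qed.

Lemma Eset_corner u : Eset u -> u = u1 \/ u = u2.
Proof.
case=> Iu [[_ ext] [_ max]]; set x := (r u).1.
have [xB|Bx] := leP x (M - B).
  right; apply: rvec_u2_inj => //; apply/esym/max.
  - by apply: ConvI_rvec.
  - by rewrite rvec_u2.
  - by rewrite rvec_u2; exact: rvec_le_B.
(* Otherwise r u is dominated by the point (x, M - x) of the segment from
   r u2 to r u1, so equals it, and extremality forces it to be r u1. *)
have AB_gt0 : 0 < A + B - M by have := rvec_le_A Iu; lra.
pose t := (x - (M - B)) / (A + B - M).
have tE : t * (A + B - M) = x - (M - B) by rewrite /t divfK ?lt0r_neq0.
have t0 : 0 < t by rewrite /t divr_gt0 // subr_gt0.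
have t_le1 : t <= 1 by rewrite /t ler_pdivrMr // mul1r; have := rvec_le_A Iu; lra.
have := ConvI_segment meet rk I_u1 I_u2 (t := t); rewrite ltW // => /(_ t_le1).
have e1 : t * A + (1 - t) * (M - B) = x by lra.
have e2 : t * (M - A) + (1 - t) * B = M - x by lra.
rewrite rvec_u1 rvec_u2 /= e1 e2 => Cx.
have ru : r u = (x, M - x).
  have Mx : (r u).2 <= M - x by have := rvec_le_M Iu; lra.
  by apply/esym/max.
have [xA|xA] := eqVneq x A.
  by left; apply: rvec_u1_inj; rewrite // ru rvec_u1 xA.
have t_lt1 : t < 1.
  rewrite lt_neqAle t_le1 andbT; apply: contra_neq xA => t1.
  by move: tE; rewrite t1 mul1r; lra.
have := ext _ _ t (ConvI_rvec R meet rk I_u1) (ConvI_rvec R meet rk I_u2).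
rewrite rvec_u1 rvec_u2 t0 t_lt1 ru /= e1 e2 => /(_ isT erefl) [AMB _].
by exfalso; have := rvec_le_A Iu; lra.
Qed.

Lemma cone_angles_u1 : M < A + B -> cone_angles u1 (pi / 4 : R, 0).
Proof.
move=> MAB; apply: cone_angles_sector (angle_pair_below_diag R) _ => x y.
rewrite sector_below_diag CconeE // rvec_u1 /dot2 /=.
split=> -[x0 y0 H]; split => //.
  by have := H _ I_u2; rewrite rvec_u2 /=; nra.
by move=> v Iv; have := rvec_le_A Iv; have := rvec_le_M Iv; nra.
Qed.

Lemma cone_angles_u2 : M < A + B -> cone_angles u2 (pi / 2 : R, pi / 4).
Proof.
move=> MAB; apply: cone_angles_sector (angle_pair_above_diag R) _ => x y.
rewrite sector_above_diag CconeE // rvec_u2 /dot2 /=.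
split=> -[x0 y0 H]; split => //.
  by have := H _ I_u1; rewrite rvec_u1 /=; nra.
by move=> v Iv; have := rvec_le_B Iv; have := rvec_le_M Iv; nra.
Qed.

Lemma cone_angles_u1_quadrant : M = A + B -> cone_angles u1 (pi / 2 : R, 0).
Proof.
move=> MAB; apply: cone_angles_sector (angle_pair_quadrant R) _ => x y.
rewrite sector_quadrant CconeE // rvec_u1 /dot2 /=.
split=> [[x0 y0 _]|[x0 y0]]; split => // v Iv.
by have := rvec_le_A Iv; have := rvec_le_B Iv; nra.
Qed.

Lemma Eset_corners_sum (f : T -> \bar R) :
  (\sum_(u | `[< Eset u >]) (Defs.coefC R le meet rk p q u)%:E * f u =
   if u1 == u2 then f u1 else (1 / 2)%:E * f u1 + (1 / 2)%:E * f u2)%E.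
Proof.
have EsetE u : `[< Eset u >] = (u == u1) || (u == u2).
  apply/asboolP/orP => [/Eset_corner[]->|[]/eqP->]; rewrite ?eqxx; auto.
  - exact: Eset_u1.
  - exact: Eset_u2.
rewrite (eq_bigl _ _ EsetE); have [u12|u12] := eqVneq u1 u2.
  have MAB : M = A + B by move: rvec_u1; rewrite u12 rvec_u2 => -[]; lra.
  rewrite -u12 (eq_bigl (pred1 u1)) => [|u]; last by rewrite orbb.
  rewrite big_pred1_eq (coefC_sector (cone_angles_u1_quadrant MAB)).
  by rewrite angle_weight_pihalf angle_weight0 subr0 mul1e.
have MAB : M < A + B.
  rewrite lt_neqAle M_le_AB andbT; apply: contra_neq u12 => MAB.
  by apply/esym/rvec_u1_inj => //; rewrite rvec_u1 rvec_u2; congr pair; lra.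
rewrite (bigD1 u1) ?eqxx //= (eq_bigl (pred1 u2)) => [|u]; last first.
  by have [->|] := eqVneq u u1; rewrite /= ?andbT ?andbF // (negPf u12).
rewrite big_pred1_eq (coefC_sector (cone_angles_u1 MAB)).
rewrite (coefC_sector (cone_angles_u2 MAB)).
rewrite angle_weight_piquarter angle_weight_pihalf angle_weight0 subr0.
by have -> : 1 - 1 / 2 = 1 / 2 :> R by field.
Qed.
End Trapezoid.

(* Properties of S_k only depend on which arguments are equal to each other or
   to 0, so they are decided by splitting on all these equalities. *)
Ltac ord_cases := repeat match goal with
  | H : is_true (?u != ?u) |- _ => by rewrite eqxx in H
  | |- context [?u == ?u] => rewrite eqxx
  | H : is_true (?u != ?v) |- context [?u == ?v] => rewrite (negbTE H)
  | H : is_true (?u != ?v) |- context [?v == ?u] => rewrite [v == u]eq_sym (negbTE H)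
  | |- context [?u == ?v] =>
      first [is_var u | lazymatch u with ord0 => idtac end];
      first [is_var v | lazymatch v with ord0 => idtac end];
      case: (eqVneq u v) => [?|?]; subst
  | |- _ => progress rewrite /=
  end.

Ltac coord_arith :=
  repeat match goal with
  | |- is_true (_ == _)%N -> _ =>
      move=> /eqP; first [by move=> ?; exfalso; lia | move=> _]
  | |- _ -> _ => move=> ?
  end;
  first [ done
        | lazymatch goal with |- @eq (ordinal _) _ _ => exfalso; lra | _ => lra end ].

Section Coordinate.
Variables (R : realType) (k : nat).
Local Notation O := (ord0 : 'I_k.+1).
Implicit Types a b x : 'I_k.+1.

Definition distS a b : nat :=
  if a == b then 0 else if (a == O) || (b == O) then 1 else 2%N.

Definition betweenS a b x : bool := (distS a x + distS x b == distS a b)%N.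

Definition meetS_nz a b : bool := (a == b) && (a != O).

Definition rcoord a b x : R := (meetS_nz x a)%:R - (meetS_nz a b)%:R.

Definition rcoord_top a b : R := ((a != O) && (a != b))%:R.

Definition rcoord_sum_top a b : R := (a != b)%:R.

Definition joinlS a b := if a != O then a else b.

Lemma leS_anti a b : leS a b -> leS b a -> a = b.
Proof. by rewrite /leS; ord_cases. Qed.

Lemma distS_sym a b : distS a b = distS b a.
Proof. by rewrite /distS; ord_cases. Qed.

Lemma distS_triangle a b c : (distS a c <= distS a b + distS b c)%N.
Proof. by rewrite /distS; ord_cases. Qed.

Lemma distS_eq0 a b : distS a b = 0%N -> a = b.
Proof. by rewrite /distS; ord_cases. Qed.

Lemma betweenS_sym a b x : betweenS a b x = betweenS b a x.
Proof. by rewrite /betweenS /distS; ord_cases. Qed.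

Lemma meetS_nz_sym a b : meetS_nz a b = meetS_nz b a.
Proof. by rewrite /meetS_nz; ord_cases. Qed.

Lemma rcoord_le_top a b x : betweenS a b x -> rcoord a b x <= rcoord_top a b.
Proof. by rewrite /betweenS /rcoord /rcoord_top /meetS_nz /distS; ord_cases; coord_arith. Qed.

Lemma rcoord_sum_le_top a b x : betweenS a b x ->
  rcoord a b x + rcoord b a x <= rcoord_sum_top a b.
Proof.
by rewrite /betweenS /rcoord /rcoord_sum_top /meetS_nz /distS; ord_cases; coord_arith.
Qed.

Lemma rcoord_sum_top_le a b : rcoord_sum_top a b <= rcoord_top a b + rcoord_top b a.
Proof. by rewrite /rcoord_sum_top /rcoord_top; ord_cases; coord_arith. Qed.

Lemma betweenS_joinl a b : betweenS a b (joinlS a b).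
Proof. by rewrite /betweenS /joinlS /distS; ord_cases. Qed.

Lemma rcoord_joinl a b : rcoord a b (joinlS a b) = rcoord_top a b.
Proof. by rewrite /rcoord /joinlS /rcoord_top /meetS_nz; ord_cases; coord_arith. Qed.

Lemma rcoord_sum_joinl a b :
  rcoord a b (joinlS a b) + rcoord b a (joinlS a b) = rcoord_sum_top a b.
Proof. by rewrite /rcoord /joinlS /rcoord_sum_top /meetS_nz; ord_cases; coord_arith. Qed.

Lemma joinlS_unique a b x : betweenS a b x -> rcoord a b x = rcoord_top a b ->
  rcoord a b x + rcoord b a x = rcoord_sum_top a b -> x = joinlS a b.
Proof.
rewrite /betweenS /rcoord /rcoord_top /rcoord_sum_top /joinlS /meetS_nz /distS;
  ord_cases; coord_arith.
Qed.
End Coordinate.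

Section CoveringGraph.
Variables k n : nat.
Local Notation S := (Skn k n).
Local Notation O := (ord0 : 'I_k.+1).
Local Notation covers := (covers (@leSkn k n)).
Local Notation cadj := (cadj (@leSkn k n)).
Local Notation cwalk := (cwalk (@leSkn k n)).
Implicit Types p q u : S.

Definition distSkn p q : nat := \sum_i distS (p i) (q i).

Definition setSkn p (i : 'I_n) (v : 'I_k.+1) : S :=
  [ffun j => if j == i then v else p j].

Lemma distSkn_sym p q : distSkn p q = distSkn q p.
Proof. by apply: eq_bigr => i _; rewrite distS_sym. Qed.

Lemma distSkn_triangle p q u : (distSkn p u <= distSkn p q + distSkn q u)%N.
Proof. by rewrite /distSkn -big_split; apply: leq_sum => i _; apply: distS_triangle. Qed.

Lemma distSkn_eq0 p q : distSkn p q = 0%N -> p = q.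
Proof.
move/eqP; rewrite /distSkn sum_nat_eq0 => /forallP d0; apply/ffunP => i.
by apply: distS_eq0; apply/eqP; have := d0 i.
Qed.

Lemma distSkn_refl p : distSkn p p = 0%N.
Proof. by rewrite /distSkn big1 // => i _; rewrite /distS eqxx. Qed.

Lemma distSkn_set p i v q :
  (distSkn (setSkn p i v) q + distS (p i) (q i) = distSkn p q + distS v (q i))%N.
Proof.
rewrite /distSkn (bigD1 i) //= [in RHS](bigD1 i) //= ffunE eqxx.
rewrite (eq_bigr (fun j => distS (p j) (q j))) => [|j /negbTE ji]; last by rewrite ffunE ji.
by set X := (\sum_(j | j != i) distS (p j) (q j))%N; lia.
Qed.

Lemma distSkn_set_self p i v : distSkn p (setSkn p i v) = distS (p i) v.
Proof.
rewrite /distSkn (bigD1 i) //= ffunE eqxx big1 ?addn0 // => j ji.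
by rewrite ffunE (negbTE ji) /distS eqxx.
Qed.

Lemma covers_setSkn p i v : p i = O -> v != O -> covers p (setSkn p i v).
Proof.
move=> pi0 v0; apply/andP; split.
  apply/andP; split.
    apply/forallP => j; rewrite /leS ffunE.
    by case: (eqVneq j i) => [->|_]; rewrite ?pi0 eqxx ?orbT.
  apply/eqP => /ffunP /(_ i); rewrite ffunE eqxx pi0 => v_0.
  by rewrite -v_0 eqxx in v0.
apply/forallP => u; apply/negP => /andP[/andP[/forallP pu pu_neq] /andP[/forallP up up_neq]].
have uE j : j != i -> u j = p j.
  by move=> ji; apply: leS_anti (pu j); have := up j; rewrite ffunE (negbTE ji).
have := up i; rewrite /leS ffunE eqxx => /orP[/eqP ui|/eqP ui].
  move/eqP: pu_neq; apply; apply/ffunP => j.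
  by case: (eqVneq j i) => [->|ji]; rewrite ?ui ?pi0 ?uE.
move/eqP: up_neq; apply; apply/ffunP => j; rewrite ffunE.
by case: (eqVneq j i) => [->|ji]; rewrite ?ui ?uE.
Qed.

Lemma covers_distSkn p q : covers p q -> (distSkn p q <= 1)%N.
Proof.
case/andP => /andP[/forallP pq /ffun_neqP[i pqi]] /forallP no_between.
have pi0 : p i = O.
  by have := pq i; rewrite /leS => /orP[/eqP|/eqP pq_i] //; rewrite pq_i eqxx in pqi.
have qi0 : q i != O by rewrite -pi0 eq_sym.
have -> : q = setSkn p i (q i).
  apply/eqP/negPn/negP => q_neq.
  have /negP[] := no_between (setSkn p i (q i)).
  rewrite (andP (covers_setSkn pi0 qi0)).1 /slt eq_sym q_neq andbT.
  apply/forallP => j; rewrite ffunE.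
  by case: (eqVneq j i) => [->|_]; [rewrite /leS eqxx orbT|exact: pq].
by rewrite distSkn_set_self pi0 /distS; ord_cases.
Qed.

Lemma cadj_distSkn p q : cadj p q -> (distSkn p q <= 1)%N.
Proof. by case/orP => [|/covers_distSkn]; [exact: covers_distSkn|rewrite distSkn_sym]. Qed.

Lemma cwalk_distSkn p q s : cwalk p q s -> (distSkn p q <= size s)%N.
Proof.
elim: s p => [|u s IHs] p [/= walk_s last_s]; first by rewrite last_s distSkn_refl.
case/andP: walk_s => pu walk_s.
have := IHs u (conj walk_s last_s); have := cadj_distSkn pu.
by have := distSkn_triangle p u q; rewrite [size _]/=; lia.
Qed.

Lemma cwalk_exists p q : exists s, cwalk p q s /\ size s = distSkn p q.
Proof.
move: {2}(distSkn p q) (leqnn (distSkn p q)) => N; elim: N p => [|N IHN] p dN.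
  have -> : p = q by apply: distSkn_eq0; lia.
  by exists [::]; rewrite distSkn_refl.
have [->|/ffun_neqP[i pqi]] := eqVneq p q; first by exists [::]; rewrite distSkn_refl.
pose v := if p i == O then q i else O.
pose p' := setSkn p i v.
have p_p' : cadj p p'.
  have [pi0|pi0] := eqVneq (p i) O.
    apply/orP; left; apply: covers_setSkn => //.
    by rewrite /v pi0 eqxx eq_sym -pi0.
  apply/orP; right.
  have -> : p = setSkn p' i (p i).
    by apply/ffunP => j; rewrite !ffunE; case: eqVneq => [->|].
  by apply: covers_setSkn => //; rewrite /p' ffunE eqxx /v (negbTE pi0).
have dp' : (distSkn p' q + 1 = distSkn p q)%N.
  have : (distS v (q i) + 1 = distS (p i) (q i))%N.
    by move: pqi; rewrite /v /distS; move: (p i) (q i) => a b; ord_cases.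
  by have := distSkn_set p i v q; rewrite -/p'; lia.
have [s [[walk_s last_s] size_s]] := IHN p' ltac:(lia).
by exists (p' :: s); split; [split => //=; rewrite p_p'|rewrite /= size_s; lia].
Qed.

Lemma Iset_distSkn p q u :
  Iset (@leSkn k n) p q u <-> (distSkn p u + distSkn u q = distSkn p q)%N.
Proof.
split.
- case=> s [[[walk_s last_s] s_min] u_s].
  have [s0 [walk_s0 size_s0]] := cwalk_exists p q.
  have := s_min _ walk_s0; have := cwalk_distSkn (conj walk_s last_s).
  move: walk_s last_s; case/splitPl: u_s => s1 s2 last_s1.
  rewrite cat_path last_cat last_s1 size_cat size_s0 => /andP[walk_s1 walk_s2] last_s2.
  have := cwalk_distSkn (conj walk_s1 last_s1).
  have := cwalk_distSkn (conj walk_s2 last_s2).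
  by have := distSkn_triangle p u q; lia.
- move=> d_pq; have [s1 [[walk_s1 last_s1] size_s1]] := cwalk_exists p u.
  have [s2 [[walk_s2 last_s2] size_s2]] := cwalk_exists u q.
  exists (s1 ++ s2); split.
    split; first by split; rewrite ?cat_path ?last_cat last_s1 ?walk_s1.
    by move=> s' /cwalk_distSkn; rewrite size_cat size_s1 size_s2 d_pq.
  by rewrite -last_s1 -cat_cons mem_cat mem_last.
Qed.

Lemma IsetE p q u :
  Iset (@leSkn k n) p q u <-> forall i, betweenS (p i) (q i) (u i).
Proof.
rewrite Iset_distSkn /distSkn -big_split /=.
have [_ eq_sum] : (\sum_i distS (p i) (q i) <=
    \sum_i (distS (p i) (u i) + distS (u i) (q i))
    ?= iff [forall i, betweenS (p i) (q i) (u i)])%N.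
  by apply: leqif_sum => i _; split; [exact: distS_triangle|rewrite /betweenS eq_sym].
split=> [d_pq i|between_u].
  by move: eq_sum; rewrite d_pq eqxx => /esym /forallP; apply.
by apply/eqP; rewrite eq_sym eq_sum; apply/forallP.
Qed.
End CoveringGraph.

Section RankVector.
Variables (R : realType) (k n : nat).
Local Notation S := (Skn k n).
Local Notation O := (ord0 : 'I_k.+1).
Local Notation rvec := (rvec R (@meetSkn k n) (@rankSkn k n)).
Local Notation Iset := (Iset (@leSkn k n)).
Local Notation Eset := (Eset R (@leSkn k n) (@meetSkn k n) (@rankSkn k n)).
Local Notation coefC := (Defs.coefC R (@leSkn k n) (@meetSkn k n) (@rankSkn k n)).
Implicit Types p q u v : S.

Definition joinlSkn p q : S := [ffun i => joinlS (p i) (q i)].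

Definition rvec_max1 p q : R := \sum_i rcoord_top R (p i) (q i).

Definition rvec_max_sum p q : R := \sum_i rcoord_sum_top R (p i) (q i).

Lemma rankSkn_sum p : ((rankSkn p)%:R : R) = \sum_i (p i != O)%:R.
Proof.
rewrite /rankSkn -sum1_card natr_sum big_mkcond /=; apply: eq_bigr => i _.
by rewrite inE; case: (p i != O).
Qed.

Lemma rvecE p q v :
  rvec p q v = (\sum_i rcoord R (p i) (q i) (v i), \sum_i rcoord R (q i) (p i) (v i)).
Proof.
rewrite /rvec !rankSkn_sum -!sumrB; congr pair; apply: eq_bigr => i _;
  by rewrite /rcoord /meetS_nz !ffunE; move: (v i) (p i) (q i) => x a b; ord_cases.
Qed.

Lemma rvec_swap p q v : rvec q p v = ((rvec p q v).2, (rvec p q v).1).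
Proof.
rewrite !rvecE /=; congr pair; apply: eq_bigr => i _;
  by rewrite /rcoord meetS_nz_sym.
Qed.

Lemma Iset_swap p q v : Iset q p v <-> Iset p q v.
Proof. by rewrite !IsetE; split=> between_v i; rewrite betweenS_sym. Qed.

Lemma rvec_max_sum_sym p q : rvec_max_sum p q = rvec_max_sum q p.
Proof. by apply: eq_bigr => i _; rewrite /rcoord_sum_top eq_sym. Qed.

Lemma rvec_le_max1 p q v : Iset p q v -> (rvec p q v).1 <= rvec_max1 p q.
Proof.
by move/IsetE => between_v; rewrite rvecE; apply: ler_sum => i _; apply: rcoord_le_top.
Qed.

Lemma rvec_le_max_sum p q v : Iset p q v ->
  (rvec p q v).1 + (rvec p q v).2 <= rvec_max_sum p q.
Proof.
move/IsetE => between_v; rewrite rvecE -big_split.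
by apply: ler_sum => i _; apply: rcoord_sum_le_top.
Qed.

Lemma rvec_max_sum_le p q : rvec_max_sum p q <= rvec_max1 p q + rvec_max1 q p.
Proof. by rewrite -big_split; apply: ler_sum => i _; apply: rcoord_sum_top_le. Qed.

Lemma Iset_joinl p q : Iset p q (joinlSkn p q).
Proof. by apply/IsetE => i; rewrite ffunE; apply: betweenS_joinl. Qed.

Lemma rvec_joinl p q :
  rvec p q (joinlSkn p q) = (rvec_max1 p q, rvec_max_sum p q - rvec_max1 p q).
Proof.
rewrite rvecE; congr pair; first by apply: eq_bigr => i _; rewrite ffunE rcoord_joinl.
rewrite -sumrB; apply: eq_bigr => i _; rewrite ffunE -rcoord_sum_joinl rcoord_joinl.
by rewrite addrC addKr.
Qed.

Lemma rvec_joinl_inj p q v : Iset p q v ->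
  rvec p q v = rvec p q (joinlSkn p q) -> v = joinlSkn p q.
Proof.
move=> /IsetE between_v; rewrite rvec_joinl rvecE => -[r1 r2].
have top := ler_sum_eq (fun i => rcoord_le_top R (between_v i)) r1.
have sum_top := ler_sum_eq (fun i => rcoord_sum_le_top R (between_v i)).
apply/ffunP => i; rewrite ffunE; apply: joinlS_unique (between_v i) (top i) _.
apply: sum_top; rewrite big_split /= r1 r2; exact: subrKC.
Qed.

Lemma Eset_Skn_sum p q (f : S -> \bar R) :
  (\sum_(u | `[< Eset p q u >]) (coefC p q u)%:E * f u =
   if joinlSkn p q == joinlSkn q p then f (joinlSkn p q)
   else (1 / 2)%:E * f (joinlSkn p q) + (1 / 2)%:E * f (joinlSkn q p))%E.
Proof.
have rvec_joinr : rvec p q (joinlSkn q p) =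
    (rvec_max_sum p q - rvec_max1 q p, rvec_max1 q p).
  by rewrite (rvec_swap q p) rvec_joinl rvec_max_sum_sym.
apply: (Eset_corners_sum (A := rvec_max1 p q) (B := rvec_max1 q p)).
- exact: rvec_le_max1.
- by move=> v /Iset_swap Iv; have := rvec_le_max1 Iv; rewrite rvec_swap.
- exact: rvec_le_max_sum.
- exact: Iset_joinl.
- exact/Iset_swap/Iset_joinl.
- exact: rvec_joinl.
- exact: rvec_joinr.
- exact: rvec_joinl_inj.
- move=> v Iv rv; apply: rvec_joinl_inj; first exact/Iset_swap.
  by rewrite (rvec_swap p q v) (rvec_swap p q (joinlSkn q p)) rv.
- exact: rvec_max_sum_le.
Qed.
End RankVector.

Section ExtendedReals.
Variable R : realType.
Local Open Scope ereal_scope.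
Implicit Types x y z : \bar R.

Lemma fin_num_adde_le x y z : x != -oo -> y != -oo -> z \is a fin_num ->
  x + y <= z -> x \is a fin_num /\ y \is a fin_num.
Proof.
move=> xN yN zf xyz; apply/andP; rewrite -fin_numD fin_numE adde_eq_ninfty negb_or xN yN.
by rewrite -ltey (le_lt_trans xyz) // ltey_eq zf.
Qed.

Lemma mul_half_ooE : (1 / 2 : R)%:E * +oo = +oo.
Proof. by rewrite mulry gtr0_sg ?mul1e. Qed.

Lemma fin_num_mul_half x : ((1 / 2)%:E * x \is a fin_num) = (x \is a fin_num).
Proof. by case: x => [r| |] //; rewrite ?mul_half_ooE // mulrNy gtr0_sg ?mul1e. Qed.

Lemma mul_half_neq_ninfty x : x != -oo -> (1 / 2)%:E * x != -oo.
Proof. by case: x => [r| |] //= _; rewrite mul_half_ooE. Qed.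

Lemma lee_avg_of_four x y m j x' y' u v :
  m + j <= x + y -> x' + u <= x + j -> y' + v <= y + j -> m + j <= x' + y' ->
  x != -oo -> y != -oo -> m != -oo -> j != -oo ->
  x' != -oo -> y' != -oo -> u != -oo -> v != -oo ->
  m + ((1 / 2)%:E * u + (1 / 2)%:E * v) <= x + y.
Proof.
move=> E1 E2 E3 E4 xN yN mN jN x'N y'N uN vN.
have [->|xoo] := eqVneq x +oo; first by rewrite addye ?leey.
have [->|yoo] := eqVneq y +oo; first by rewrite addey ?leey.
have xf : x \is a fin_num by rewrite fin_numE xN.
have yf : y \is a fin_num by rewrite fin_numE yN.
have [mf jf] : m \is a fin_num /\ j \is a fin_num.
  by apply: fin_num_adde_le E1 => //; rewrite fin_numD xf yf.
have [x'f uf] : x' \is a fin_num /\ u \is a fin_num.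
  by apply: fin_num_adde_le E2 => //; rewrite fin_numD xf jf.
have [y'f vf] : y' \is a fin_num /\ v \is a fin_num.
  by apply: fin_num_adde_le E3 => //; rewrite fin_numD yf jf.
move: E1 E2 E3 E4; rewrite -(fineK xf) -(fineK yf) -(fineK mf) -(fineK jf).
rewrite -(fineK x'f) -(fineK y'f) -(fineK uf) -(fineK vf).
by rewrite -!EFinM -!EFinD !lee_fin; lra.
Qed.

Lemma lee_of_avg_two x y m j u v :
  m + ((1 / 2)%:E * u + (1 / 2)%:E * v) <= x + y ->
  j + ((1 / 2)%:E * u + (1 / 2)%:E * v) <= u + v ->
  x != -oo -> y != -oo -> m != -oo -> j != -oo -> u != -oo -> v != -oo ->
  m + j <= x + y.
Proof.
move=> W1 W2 xN yN mN jN uN vN.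
have [->|xoo] := eqVneq x +oo; first by rewrite addye ?leey.
have [->|yoo] := eqVneq y +oo; first by rewrite addey ?leey.
have xf : x \is a fin_num by rewrite fin_numE xN.
have yf : y \is a fin_num by rewrite fin_numE yN.
have avgN : (1 / 2)%:E * u + (1 / 2)%:E * v != -oo.
  by rewrite adde_eq_ninfty negb_or !mul_half_neq_ninfty.
have [mf] : m \is a fin_num /\ (1 / 2)%:E * u + (1 / 2)%:E * v \is a fin_num.
  by apply: fin_num_adde_le W1 => //; rewrite fin_numD xf yf.
rewrite fin_numD !fin_num_mul_half => /andP[uf vf].
have [jf _] : j \is a fin_num /\ (1 / 2)%:E * u + (1 / 2)%:E * v \is a fin_num.
  by apply: fin_num_adde_le W2 => //; rewrite fin_numD uf vf.
move: W1 W2; rewrite -(fineK xf) -(fineK yf) -(fineK mf) -(fineK jf).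
rewrite -(fineK uf) -(fineK vf).
by rewrite -!EFinM -!EFinD !lee_fin; lra.
Qed.
End ExtendedReals.

Section SknIdentities.
Variables k n : nat.
Implicit Types p q : Skn k n.
Local Notation meet := (@meetSkn k n).
Local Notation sqcup := (@sqcupSkn k n).
Local Notation joinl := (@joinlSkn k n).

Ltac coordinatewise p q := let i := fresh "i" in
  apply/ffunP => i; rewrite !ffunE /joinlS; move: (p i) (q i) => ? ?; ord_cases.

Lemma sqcup_sqcupl p q : sqcup p (sqcup p q) = joinl p q.
Proof. by coordinatewise p q. Qed.

Lemma sqcup_sqcupr p q : sqcup q (sqcup p q) = joinl q p.
Proof. by coordinatewise p q. Qed.

Lemma meet_meet_sqcup p q : meet (meet p (sqcup p q)) (meet q (sqcup p q)) = meet p q.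
Proof. by coordinatewise p q. Qed.

Lemma sqcup_meet_sqcup p q : sqcup (meet p (sqcup p q)) (meet q (sqcup p q)) = sqcup p q.
Proof. by coordinatewise p q. Qed.

Lemma joinl_joinl p q : joinl (joinl p q) (joinl q p) = joinl p q.
Proof. by coordinatewise p q. Qed.

Lemma meet_joinl p q : meet (joinl p q) (joinl q p) = sqcup p q.
Proof. by coordinatewise p q. Qed.

Lemma joinl_sym_sqcup p q : joinl p q = joinl q p -> joinl p q = sqcup p q.
Proof.
move/ffunP => E; apply/ffunP => i; move: (E i) => /eqP; rewrite !ffunE /joinlS.
by move: (p i) (q i) => a b; ord_cases.
Qed.
End SknIdentities.

Theorem theorem3p12 (R : realType) (k n : nat) (hk : (2 <= k)%N) (hn : (1 <= n)%N)
  (f : Skn k n -> \bar R) (hf : forall p, f p <> -oo%E) :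
  k_submodular f <-> submodular (@leSkn k n) (@meetSkn k n) (@rankSkn k n) f.
Proof.
have fN p : f p != -oo%E by apply/eqP.
split=> fsub p q; rewrite ?Eset_Skn_sum.
- have [E|E] := eqVneq (joinlSkn p q) (joinlSkn q p).
    by rewrite (joinl_sym_sqcup E); apply: fsub.
  have := fsub p (sqcupSkn p q); rewrite sqcup_sqcupl => E2.
  have := fsub q (sqcupSkn p q); rewrite sqcup_sqcupr => E3.
  have := fsub (meetSkn p (sqcupSkn p q)) (meetSkn q (sqcupSkn p q)).
  rewrite meet_meet_sqcup sqcup_meet_sqcup => E4.
  by apply: (lee_avg_of_four (fsub p q) E2 E3 E4).
- have := fsub p q; rewrite Eset_Skn_sum.
  have [E|E] := eqVneq (joinlSkn p q) (joinlSkn q p).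
    by rewrite (joinl_sym_sqcup E).
  have := fsub (joinlSkn p q) (joinlSkn q p).
  rewrite Eset_Skn_sum !joinl_joinl meet_joinl (negbTE E).
  by move=> W2 W1; apply: (lee_of_avg_two W1 W2).
Qed.
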